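(* Let $(\mathcal{A},\mathcal{E})$ be a finite, essentially small exact category. Then: (GR4) for all $X,Y\in\mathrm{ind}\mathcal{A}$, $\mu_\mathcal{E}(X)\lll\mu_\mathcal{E}(Y)$ or $\mu_\mathcal{E}(Y)\lll\mu_\mathcal{E}(X)$; (GR5) for every $n\in\mathbb{N}$ the set $\{\mu_\mathcal{E}(X) : X\in\mathrm{ind}\mathcal{A},\ l_\mathcal{E}(X)\le n\}$ is finite; (GR6) $X\in\mathrm{ind}\mathcal{A}$ is $\mathcal{E}$-simple if and only if $\mu_\mathcal{E}(X)\lll\mu_\mathcal{E}(Y)$ for all $Y\in\mathrm{ind}\mathcal{A}$.
   Context: $(\mathcal{A},\mathcal{E})$ is a Quillen exact category; admissible monics are morphisms $i$ with $(i,d)\in\mathcal{E}$ for some $d$. $X\subsetneq_\mathcal{E}Y$ means there is an admissible monic $X\to Y$ that is not an isomorphism. A nonzero object $S$ is $\mathcal{E}$-simple if every object $A$ admitting an admissible monic $A\to S$ is zero or isomorphic to $S$. The $\mathcal{E}$-length $l_\mathcal{E}(X)$ is the supremum of all $n$ such that there is a chain $0=X_0\to\cdots\to X_n=X$ of admissible monics none of which is an isomorphism; $(\mathcal{A},\mathcal{E})$ is finite if $l_\mathcal{E}(X)<\infty$ for all $X$. $\mathrm{ind}\mathcal{A}$ is the set of isomorphism classes of indecomposable objects. $\mathfrak{S}(\mathbb{N})$ is the set of finite nonempty sequences of natural numbers, totally ordered by: $x\lll y$ iff $x=y$, or $x$ is a proper prefix of $y$, or at the first index $i$ where $x_i\neq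 y_i$ (both defined) one has $x_i>y_i$. For indecomposable $X$, $\mu_\mathcal{E}(X)$ is the $\lll$-maximum of $(l_\mathcal{E}(X_1),\dots,l_\mathcal{E}(X_n))$ over all chains $X_1\subsetneq_\mathcal{E}\cdots\subsetneq_\mathcal{E}X_n=X$ ($n\ge1$) with all $X_i$ indecomposable. *)

From HB Require Import structures.
From mathcomp Require Import all_boot all_algebra.
From Stdlib Require Import ClassicalEpsilon.
Set Implicit Arguments. Unset Strict Implicit. Unset Printing Implicit Defensive.
Import GRing.Theory.
Local Open Scope ring_scope.

Record preadd := PreAdd {
  Obj : Type;
  Hom : Obj -> Obj -> zmodType;
  comp : forall {X Y Z : Obj}, Hom Y Z -> Hom X Y -> Hom X Z;
  idm : forall X : Obj, Hom X X;
  compA : forall X Y Z W (h : Hom Z W) (g : Hom Y Z) (f : Hom X Y),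
      comp h (comp g f) = comp (comp h g) f;
  comp1m : forall X Y (f : Hom X Y), comp (idm Y) f = f;
  compm1 : forall X Y (f : Hom X Y), comp f (idm X) = f;
  compDl : forall X Y Z (g1 g2 : Hom Y Z) (f : Hom X Y),
      comp (g1 + g2) f = comp g1 f + comp g2 f;
  compDr : forall X Y Z (g : Hom Y Z) (f1 f2 : Hom X Y),
      comp g (f1 + f2) = comp g f1 + comp g f2
}.
Arguments comp {p X Y Z}.
Arguments idm {p}.

Section ExactCategories.
Variable C : preadd.
Local Notation Obj := (@Obj C).
Local Notation Hom := (@Hom C).

(** zero object (in a preadditive category: id_X = 0) *)
Definition is_zero (X : Obj) : Prop := idm X = 0.

Definition iso {X Y : Obj} (f : Hom X Y) : Prop :=
  exists g : Hom Y X, comp g f = idm X /\ comp f g = idm Y.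

Definition isomorphic (X Y : Obj) : Prop := exists f : Hom X Y, iso f.

Definition biprod (W A B : Obj) (i1 : Hom A W) (i2 : Hom B W)
  (p1 : Hom W A) (p2 : Hom W B) : Prop :=
  [/\ comp p1 i1 = idm A, comp p2 i2 = idm B, comp p1 i2 = 0,
      comp p2 i1 = 0 & comp i1 p1 + comp i2 p2 = idm W].

Definition additive : Prop :=
  (exists Z : Obj, is_zero Z) /\
  (forall A B : Obj, exists W (i1 : Hom A W) (i2 : Hom B W) (p1 : Hom W A)
     (p2 : Hom W B), biprod i1 i2 p1 p2).

Definition is_kernel {X Y Z : Obj} (i : Hom X Y) (d : Hom Y Z) : Prop :=
  comp d i = 0 /\
  forall T (f : Hom T Y), comp d f = 0 -> exists! g : Hom T X, comp i g = f.

Definition is_cokernel {X Y Z : Obj} (i : Hom X Y) (d : Hom Y Z) : Prop :=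
  comp d i = 0 /\
  forall T (f : Hom Y T), comp f i = 0 -> exists! g : Hom Z T, comp g d = f.

Definition exclass : Type := forall X Y Z : Obj, Hom X Y -> Hom Y Z -> Prop.

Variable E : exclass.

Definition adm_monic {X Y : Obj} (i : Hom X Y) : Prop :=
  exists Z (d : Hom Y Z), E i d.
Definition adm_epic {Y Z : Obj} (d : Hom Y Z) : Prop :=
  exists X (i : Hom X Y), E i d.

Definition is_pushout {X Y X' Y' : Obj} (f : Hom X X') (i : Hom X Y)
  (i' : Hom X' Y') (f' : Hom Y Y') : Prop :=
  comp f' i = comp i' f /\
  forall T (u : Hom Y T) (v : Hom X' T), comp u i = comp v f ->
    exists! w : Hom Y' T, comp w f' = u /\ comp w i' = v.

Definition is_pullback {Y Z Z' Y' : Obj} (d : Hom Y Z) (g : Hom Z' Z)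
  (d' : Hom Y' Z') (g' : Hom Y' Y) : Prop :=
  comp d g' = comp g d' /\
  forall T (u : Hom T Y) (v : Hom T Z'), comp d u = comp g v ->
    exists! w : Hom T Y', comp g' w = u /\ comp d' w = v.

(** Quillen exact structure (Buehler, Def. 2.1) *)
Definition exact_structure : Prop :=
  [/\
      (forall X Y Z (i : Hom X Y) (d : Hom Y Z), E i d ->
         is_kernel i d /\ is_cokernel i d),
      (forall X Y Z X' Y' Z' (i : Hom X Y) (d : Hom Y Z) (i' : Hom X' Y')
         (d' : Hom Y' Z') (a : Hom X X') (b : Hom Y Y') (c : Hom Z Z'),
         E i d -> iso a -> iso b -> iso c ->
         comp b i = comp i' a -> comp c d = comp d' b -> E i' d'),
      (forall X, adm_monic (idm X)) /\ (forall X, adm_epic (idm X)),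
      (forall X Y Z (f : Hom X Y) (g : Hom Y Z),
         adm_monic f -> adm_monic g -> adm_monic (comp g f)) /\
      (forall X Y Z (f : Hom X Y) (g : Hom Y Z),
         adm_epic f -> adm_epic g -> adm_epic (comp g f))
    &
      (forall X Y X' (i : Hom X Y) (f : Hom X X'), adm_monic i ->
         exists Y' (i' : Hom X' Y') (f' : Hom Y Y'),
           is_pushout f i i' f' /\ adm_monic i') /\
      (forall Y Z Z' (d : Hom Y Z) (g : Hom Z' Z), adm_epic d ->
         exists Y' (d' : Hom Y' Z') (g' : Hom Y' Y),
           is_pullback d g d' g' /\ adm_epic d')].

Definition proper_sub (X Y : Obj) : Prop :=
  exists i : Hom X Y, adm_monic i /\ ~ iso i.

Definition E_simple (S : Obj) : Prop :=
  ~ is_zero S /\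
  forall A (i : Hom A S), adm_monic i -> is_zero A \/ isomorphic A S.

Definition has_chain (X : Obj) (n : nat) : Prop :=
  exists (Xs : nat -> Obj) (f : forall k, Hom (Xs k) (Xs k.+1)),
    [/\ is_zero (Xs 0%N), Xs n = X &
        forall k, (k < n)%N -> adm_monic (f k) /\ ~ iso (f k)].

Definition is_sup_nat (P : nat -> Prop) (l : nat) : Prop :=
  (forall n, P n -> (n <= l)%N) /\
  (forall m, (forall n, P n -> (n <= m)%N) -> (l <= m)%N).

(** l_E(X) (meaningful when it is finite) *)
Definition lE (X : Obj) : nat :=
  epsilon (inhabits 0%N) (is_sup_nat (has_chain X)).

Definition finite_exact : Prop :=
  forall X : Obj, exists N, forall n, has_chain X n -> (n <= N)%N.

Definition indec (X : Obj) : Prop :=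
  ~ is_zero X /\
  forall A B (i1 : Hom A X) (i2 : Hom B X) (p1 : Hom X A) (p2 : Hom X B),
    biprod i1 i2 p1 p2 -> is_zero A \/ is_zero B.

Fixpoint chainR (R : Obj -> Obj -> Prop) (x : Obj) (xs : seq Obj) : Prop :=
  match xs with
  | [::] => True
  | y :: ys => R x y /\ chainR R y ys
  end.

End ExactCategories.

Fixpoint lll (x y : seq nat) : bool :=
  match x, y with
  | [::], _ => true
  | _ :: _, [::] => false
  | a :: x', b :: y' => if a == b then lll x' y' else (b < a)%N
  end.

Section Mu.
Variable C : preadd.
Variable E : exclass C.

Definition mu_cand (X : Obj C) (t : seq nat) : Prop :=
  exists (x0 : Obj C) (xs : seq (Obj C)),
    [/\ last x0 xs = X,
        (forall y, List.In y (x0 :: xs) -> indec y),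
        chainR (proper_sub E) x0 xs
      & t = map (lE E) (x0 :: xs)].

Definition muE (X : Obj C) : seq nat :=
  epsilon (inhabits [::])
    (fun t => mu_cand X t /\ forall t', mu_cand X t' -> lll t' t).

End Mu.

(** In a finite exact category the length [lE] strictly increases along
    proper admissible monics, so every chain [X_1 ⊊ ... ⊊ X_n = X] of
    indecomposables is bounded by [lE X] both in its number of terms and in
    its entries.  Hence [X] has only finitely many candidate sequences and
    [muE X] is their maximum for the total order [lll].  An object is
    [E]-simple exactly when its length is [1]; descending from any
    indecomposable [Y] through proper indecomposable subobjects ends at such
    an object, so [muE Y] always starts with [1], and [[:: 1]], the
    invariant of the simple objects, is the [lll]-least possible value. *)

From Pilot Require Import Defs.
From HB Require Import structures.
From mathcomp Require Import all_boot all_order all_algebra.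
From Stdlib Require Import ClassicalEpsilon Classical.
Import Pilot.Defs.
Set Implicit Arguments. Unset Strict Implicit. Unset Printing Implicit Defensive.

Import Order.TTheory.

Section Preadditive.
Variable C : preadd.
Local Notation Obj := (Obj C).
Local Notation Hom := (@Hom C).

Lemma comp0m (X Y Z : Obj) (f : Hom X Y) : comp (0%R : Hom Y Z) f = 0%R.
Proof.
have := compDl (0%R : Hom Y Z) 0%R f; rewrite GRing.addr0 => h.
by apply: (GRing.addrI (comp (0%R : Hom Y Z) f)); rewrite GRing.addr0 -h.
Qed.

Lemma compm0 (X Y Z : Obj) (g : Hom Y Z) : comp g (0%R : Hom X Y) = 0%R.
Proof.
have := compDr g (0%R : Hom X Y) 0%R; rewrite GRing.addr0 => h.
by apply: (GRing.addrI (comp g (0%R : Hom X Y))); rewrite GRing.addr0 -h.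
Qed.

Lemma hom_from_zero (Z B : Obj) (f : Hom Z B) : is_zero Z -> f = 0%R.
Proof. by move=> hZ; rewrite -(compm1 f) hZ compm0. Qed.

Lemma hom_to_zero (Z B : Obj) (f : Hom B Z) : is_zero Z -> f = 0%R.
Proof. by move=> hZ; rewrite -(comp1m f) hZ comp0m. Qed.

Lemma isomorphic_sym (A B : Obj) : isomorphic A B -> isomorphic B A.
Proof. by move=> [f [g [h1 h2]]]; exists g, f. Qed.

Lemma isomorphic_zero (A B : Obj) : isomorphic A B -> is_zero A -> is_zero B.
Proof. by move=> [f [g [_ h]]] hA; rewrite /is_zero -h (hom_from_zero f hA) comp0m. Qed.

Lemma biprod_sym (W A B : Obj) (i1 : Hom A W) (i2 : Hom B W)
    (p1 : Hom W A) (p2 : Hom W B) :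
  biprod i1 i2 p1 p2 -> biprod i2 i1 p2 p1.
Proof. by case=> h1 h2 h3 h4 h5; split => //; rewrite GRing.addrC. Qed.

End Preadditive.

Section ExactCategory.
Variables (C : preadd) (E : exclass C).
Hypothesis HE : exact_structure E.
Local Notation Obj := (Obj C).
Local Notation Hom := (@Hom C).
Local Notation PS := (proper_sub E).

Lemma iso_adm_monic (A B : Obj) (f : Hom A B) : iso f -> adm_monic E f.
Proof.
case: HE => _ Hcl [HE0 _] _ _ [g [h1 h2]].
have [Z [d Hd]] := HE0 A.
exists Z, (comp d g).
apply: (Hcl _ _ _ _ _ _ _ d _ _ (idm A) f (idm Z) Hd).
- by exists (idm A); rewrite comp1m.
- by exists g.
- by exists (idm Z); rewrite comp1m.
- by [].
- by rewrite comp1m -compA h1 compm1.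
Qed.

Lemma adm_monic_comp (X Y Z : Obj) (f : Hom X Y) (g : Hom Y Z) :
  adm_monic E f -> adm_monic E g -> adm_monic E (comp g f).
Proof. by case: HE => _ _ _ [H _] _; apply: H. Qed.

Lemma adm_monic_mono (T W Z : Obj) (i : Hom W Z) (f : Hom T W) :
  adm_monic E i -> comp i f = 0%R -> f = 0%R.
Proof.
case: HE => Hker _ _ _ _ [Z' [d Hd]] hif.
have [[_ Hu] _] := Hker _ _ _ _ _ Hd.
have [g0 [_ Hg0]] := Hu T 0%R ltac:(by rewrite compm0).
by rewrite -(Hg0 f hif) -(Hg0 0%R ltac:(by rewrite compm0)).
Qed.

Lemma exists_zero_adm_sub (X : Obj) :
  exists K (i : Hom K X), is_zero K /\ adm_monic E i.
Proof.
case: HE => Hker _ [_ HE0] _ _.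
have [K [i Hi]] := HE0 X.
have hi : adm_monic E i by exists X, (idm X).
exists K, i; split => //; apply: adm_monic_mono hi _.
by have [[+ _] _] := Hker _ _ _ _ _ Hi; rewrite comp1m compm1.
Qed.

Lemma adm_monic_to_zero (W Z : Obj) (i : Hom W Z) :
  adm_monic E i -> is_zero Z -> is_zero W.
Proof.
by move=> hi hZ; apply: adm_monic_mono hi _; rewrite (hom_to_zero i hZ) comp0m.
Qed.

Lemma proper_sub_nonzero (W Z : Obj) : PS W Z -> ~ is_zero Z.
Proof.
move=> [i [hi hni]] hZ; apply: hni; exists 0%R.
by rewrite comp0m compm0 hZ (adm_monic_to_zero hi hZ).
Qed.

Lemma proper_sub_isomorphic_r (Z A B : Obj) :
  PS Z A -> isomorphic A B -> PS Z B.
Proof.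
move=> [i [hi hni]] [f [g [h1 h2]]].
exists (comp f i); split.
  by apply: adm_monic_comp => //; apply: iso_adm_monic; exists g.
move=> [h [k1 k2]]; apply: hni; exists (comp h f); split; first by rewrite -compA.
have -> : comp i (comp h f) = comp g (comp (comp (comp f i) h) f)
  by rewrite !compA h1 comp1m.
by rewrite k2 comp1m.
Qed.

(* [i2 : B -> W] is, up to isomorphism, the pushout of the admissible monic
   [0 -> A] along [0 -> B]. *)
Lemma biprod_adm_monic (W A B : Obj) (i1 : Hom A W) (i2 : Hom B W)
    (p1 : Hom W A) (p2 : Hom W B) :
  biprod i1 i2 p1 p2 -> adm_monic E i2.
Proof.
case=> h1 h2 h3 h4 h5.
have [K [k [hK hk]]] := exists_zero_adm_sub A.
have [_ _ _ _ [HE2 _]] := HE.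
have [Y' [i' [f' [[hsq hpo] hi']]]] := HE2 _ _ _ k (0%R : Hom K B) hk.
have [w [[hw1 hw2] _]] :=
  hpo W i1 i2 (etrans (hom_from_zero _ hK) (esym (hom_from_zero _ hK))).
pose w' := (comp f' p1 + comp i' p2)%R.
have [w0 [_ hu]] := hpo Y' f' i' hsq.
have w'w : comp w' w = idm Y'.
  rewrite -(hu (idm Y')); last by rewrite !comp1m.
  symmetry; apply: hu.
  rewrite -!compA hw1 hw2 /w' !compDl -!compA h1 h2 h3 h4 !compm1 !compm0.
  by rewrite GRing.addr0 GRing.add0r.
have ww' : comp w w' = idm W by rewrite /w' compDr !compA hw1 hw2.
by rewrite -hw2; apply: adm_monic_comp => //; apply: iso_adm_monic; exists w'.
Qed.

Lemma biprod_proper_sub (W A B : Obj) (i1 : Hom A W) (i2 : Hom B W)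
    (p1 : Hom W A) (p2 : Hom W B) :
  biprod i1 i2 p1 p2 -> ~ is_zero B -> PS A W.
Proof.
move=> hb hB; exists i1; split; first exact: biprod_adm_monic (biprod_sym hb).
case: hb => _ h2 _ h4 _ [g [_ g2]]; apply: hB.
have p20 : p2 = 0%R by rewrite -(compm1 p2) -g2 compA h4 comp0m.
by rewrite /is_zero -h2 p20 comp0m.
Qed.

Lemma not_indec_proper_sub (A : Obj) :
  ~ is_zero A -> ~ indec A -> exists A', ~ is_zero A' /\ PS A' A.
Proof.
move=> hA hA_dec; apply: NNPP => hno; apply: hA_dec; split => // A' B' i1 i2 p1 p2 hb.
apply: NNPP => /not_or_and [hA' hB']; apply: hno.
by exists A'; split => //; apply: biprod_proper_sub hb hB'.
Qed.

End ExactCategory.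

Lemma bounded_nat_pred_max (P : nat -> Prop) (N : nat) :
  (exists n, P n) -> (forall n, P n -> n <= N) ->
  exists l, P l /\ forall n, P n -> n <= l.
Proof.
elim: N => [|N IH] [n0 hn0] hN.
  by exists 0; split => [|n /hN //]; move: (hN _ hn0); rewrite leqn0 => /eqP <-.
case: (classic (P N.+1)) => hP; first by exists N.+1.
apply: IH; first by exists n0.
move=> n hn; move: (hN _ hn); rewrite leq_eqVlt ltnS => /orP [/eqP en|//].
by rewrite en in hn.
Qed.

Lemma chainR_rcons (C : preadd) (R : Obj C -> Obj C -> Prop) x xs y :
  chainR R x xs -> R (last x xs) y -> chainR R x (rcons xs y).
Proof. by elim: xs x => [|z zs IH] x //= [hxz hzs] hy; split => //; apply: IH. Qed.

Section Chains.
Variables (C : preadd) (E : exclass C).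
Local Notation Obj := (Obj C).
Local Notation Hom := (@Hom C).
Local Notation PS := (proper_sub E).

Definition proper_chain (X : Obj) (n : nat) : Prop :=
  exists Xs : nat -> Obj,
    [/\ is_zero (Xs 0), Xs n = X & forall k, k < n -> PS (Xs k) (Xs k.+1)].

Lemma has_chainP (X : Obj) (n : nat) : has_chain E X n <-> proper_chain X n.
Proof.
split=> [[Xs [f [h0 hn hk]]]|[Xs [h0 hn hk]]].
  by exists Xs; split => // k /hk [h1 h2]; exists (f k).
pose P k (g : Hom (Xs k) (Xs k.+1)) := adm_monic E g /\ ~ iso g.
exists Xs, (fun k => epsilon (inhabits 0%R) (P k)); split => // k /hk [g hg].
by apply: (epsilon_spec (inhabits 0%R) (P k)); exists g.
Qed.

Lemma proper_chain_extend (A B : Obj) (n : nat) :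
  proper_chain A n -> PS A B -> proper_chain B n.+1.
Proof.
move=> [Xs [h0 hn hk]] hAB.
exists (fun k => if k <= n then Xs k else B); split => /= [//||k].
  by rewrite ltnn.
rewrite ltnS => hkn; rewrite hkn.
by case: ltngtP hkn => // [/hk //|-> _]; rewrite hn.
Qed.

Hypothesis HE : exact_structure E.

Lemma proper_chain_isomorphic (A B : Obj) (n : nat) :
  proper_chain A n -> isomorphic A B -> proper_chain B n.
Proof.
move=> [Xs [h0 hn hk]] hAB; case: n hn hk => [|m] hn hk.
  rewrite -hn in hAB; exists (fun _ => B).
  by split => //; apply: isomorphic_zero hAB h0.
exists (fun k => if k == m.+1 then B else Xs k); split => [//||k hkm].
  by rewrite eqxx.
rewrite ltn_eqF // eqSS; case: eqP => [->|/eqP hne].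
  by apply: proper_sub_isomorphic_r (hk m _) _; rewrite ?hn.
exact: hk.
Qed.

Lemma proper_chain_nonzero (X : Obj) : ~ is_zero X -> proper_chain X 1.
Proof.
move=> hX; have [K [i [hK hi]]] := exists_zero_adm_sub HE X.
exists (fun k => if k is 0 then K else X); split => // k.
rewrite ltnS leqn0 => /eqP -> /=.
exists i; split => // hiso; apply: hX.
exact: isomorphic_zero (ex_intro _ i hiso) hK.
Qed.

End Chains.

Section Length.
Variables (C : preadd) (E : exclass C).
Hypotheses (HE : exact_structure E) (Hfin : finite_exact E).
Local Notation Obj := (Obj C).
Local Notation PS := (proper_sub E).

Lemma lE_spec (X : Obj) :
  proper_chain E X (lE E X) /\ forall n, proper_chain E X n -> n <= lE E X.
Proof.
have [N hN] := Hfin X.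
have [n0 /has_chainP hn0] : exists n, proper_chain E X n.
  case: (classic (is_zero X)) => hX; first by exists 0, (fun=> X).
  by exists 1; apply: proper_chain_nonzero.
have [l [hl hmax]] := bounded_nat_pred_max (ex_intro _ n0 hn0) hN.
have [hsup_ub hsup_least] : is_sup_nat (has_chain E X) (lE E X).
  by apply: (epsilon_spec (inhabits 0)); exists l; split => // m; apply.
have -> : lE E X = l.
  by apply/eqP; rewrite eqn_leq hsup_least //= hsup_ub.
by split=> [|n /has_chainP /hmax //]; apply/has_chainP.
Qed.

Lemma proper_sub_lE_lt (A B : Obj) : PS A B -> lE E A < lE E B.
Proof.
by move=> hAB; apply: (lE_spec B).2; apply: proper_chain_extend (lE_spec A).1 hAB.
Qed.

Lemma lE_isomorphic (A B : Obj) : isomorphic A B -> lE E A = lE E B.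
Proof.
move=> hAB; have [hA _] := lE_spec A; have [hB _] := lE_spec B.
apply/eqP; rewrite eqn_leq; apply/andP; split; apply: (lE_spec _).2.
- exact: (proper_chain_isomorphic HE hA hAB).
- exact: (proper_chain_isomorphic HE hB (isomorphic_sym hAB)).
Qed.

Lemma lE_gt0P (X : Obj) : 0 < lE E X <-> ~ is_zero X.
Proof.
split=> [|hX]; last exact: (lE_spec X).2 _ (proper_chain_nonzero HE hX).
have [[Xs [_ hn hk]] _] := lE_spec X.
case: (lE E X) hn hk => [//|m] hn hk _.
by rewrite -hn; exact: (proper_sub_nonzero HE (hk m (ltnSn m))).
Qed.

Lemma proper_sub_trans (A B Y : Obj) : PS A B -> PS B Y -> PS A Y.
Proof.
move=> hAB hBY; have lAB := proper_sub_lE_lt hAB; have lBY := proper_sub_lE_lt hBY.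
case: hAB => [a [ha _]]; case: hBY => [b [hb _]].
exists (comp b a); split; first exact: adm_monic_comp.
move=> hiso; have := lE_isomorphic (ex_intro _ _ hiso).
by move=> eAY; move: (ltn_trans lAB lBY); rewrite eAY ltnn.
Qed.

(* Splitting off nonzero summands strictly lowers the length, so it stops at
   an indecomposable. *)
Lemma indec_proper_sub (A Y : Obj) :
  ~ is_zero A -> PS A Y -> exists B, indec B /\ PS B Y.
Proof.
move: {2}(lE E A) (leqnn (lE E A)) => n; elim: n A => [|n IH] A hn hA hAY.
  by move: hn; rewrite leqn0 => /eqP hA0; move/lE_gt0P: hA; rewrite hA0.
case: (classic (indec A)) => hind; first by exists A.
have [A' [hA' hA'A]] := not_indec_proper_sub HE hA hind.
apply: IH hA' (proper_sub_trans hA'A hAY).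
by rewrite -ltnS; apply: leq_trans (proper_sub_lE_lt hA'A) hn.
Qed.

Lemma proper_sub_of_lE_gt1 (X : Obj) :
  1 < lE E X -> exists A, ~ is_zero A /\ PS A X.
Proof.
have [[Xs [_ hn hk]] _] := lE_spec X.
case: (lE E X) hn hk => [|[|m]] // hn hk _.
exists (Xs m.+1); split; last by rewrite -hn; apply: hk.
exact: (proper_sub_nonzero HE (hk m (ltnW (ltnSn _)))).
Qed.

Lemma E_simpleE (X : Obj) : ~ is_zero X -> E_simple E X <-> lE E X = 1.
Proof.
move=> hX; split=> [[_ hsimple]|hl1].
  have /lE_gt0P hpos := hX.
  apply/eqP; rewrite eqn_leq hpos andbT leqNgt.
  apply/negP => /proper_sub_of_lE_gt1 [A [hA hAX]].
  have lAX := proper_sub_lE_lt hAX; case: hAX => [i [hi _]].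
  case: (hsimple A i hi) => [//|/lE_isomorphic eAX].
  by move: lAX; rewrite eAX ltnn.
split=> // A i hi; case: (classic (iso i)) => [hiso|hniso]; first by right; exists i.
left; apply: NNPP => /lE_gt0P hA.
by have := proper_sub_lE_lt (ex_intro _ i (conj hi hniso)); rewrite hl1 ltnS leqNgt hA.
Qed.

Lemma indec_root (Y : Obj) : indec Y ->
  exists x0 xs, [/\ chainR PS x0 xs, (forall y, List.In y (x0 :: xs) -> indec y),
                    last x0 xs = Y & lE E x0 = 1].
Proof.
move: {2}(lE E Y) (leqnn (lE E Y)) => n; elim: n Y => [|n IH] Y hn hY.
  by move: hn; rewrite leqn0 => /eqP hY0; move/lE_gt0P: hY.1; rewrite hY0.
case: (eqVneq (lE E Y) 1) => [hY1|hY1]; first by exists Y, [::]; split => // y [<-|[]].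
have /lE_gt0P hpos := hY.1.
have {}hY1 : 1 < lE E Y by rewrite ltn_neqAle eq_sym hY1.
have [A [hA hAY]] := proper_sub_of_lE_gt1 hY1.
have [B [hB hBY]] := indec_proper_sub hA hAY.
have lBY := proper_sub_lE_lt hBY.
have [x0 [xs [hch hind hlast h1]]] := IH B (leq_trans lBY hn) hB.
exists x0, (rcons xs Y); split; last by [].
- by apply: chainR_rcons; rewrite ?hlast.
- move=> y; rewrite -cats1 => /(List.in_app_or (x0 :: xs)) [/hind //|[<- //|[]]].
- by rewrite last_rcons.
Qed.
End Length.

Lemma lllE (x y : seq nat) : lll x y = (x <= y :> seqlexi nat^d)%O.
Proof.
elim: x y => [|a x IH] [|b y] //=.
by rewrite lexi_cons IH !leEdual !leEnat; case: ltngtP.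
Qed.

Lemma lll_total (x y : seq nat) : lll x y || lll y x.
Proof. by rewrite !lllE le_total. Qed.

Lemma exists_max_of_finite (d : Order.disp_t) (T : orderType d)
    (P : T -> Prop) (s : seq T) :
  (forall t, P t -> t \in s) -> (exists t, P t) ->
  exists t, P t /\ forall t', P t' -> (t' <= t)%O.
Proof.
elim: s P => [|a s IH] P hPs [t0 ht0]; first by move: (hPs _ ht0).
pose P' t := P t /\ t <> a.
have hP's : forall t, P' t -> t \in s.
  by move=> t [/hPs]; rewrite inE => /orP [/eqP //|//].
case: (classic (exists t, P' t)) => [/(IH _ hP's) [m [[hm _] hmax]]|hnoP'].
  case: (classic (P a)) => hPa; last first.
    exists m; split => // t' ht'; apply: hmax; split => // eqta.
    by apply: hPa; rewrite -eqta.
  have [hma|ham] := leP m a.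
    exists a; split => // t' ht'; case: (classic (t' = a)) => [->//|hta].
    exact: le_trans (hmax t' (conj ht' hta)) hma.
  exists m; split => // t' ht'; case: (classic (t' = a)) => [->|hta].
    exact: ltW.
  exact: hmax.
have eqta : t0 = a by apply: NNPP => hta; apply: hnoP'; exists t0.
exists a; split => [|t' ht']; first by rewrite -eqta.
by case: (classic (t' = a)) => [->//|hta]; case: hnoP'; exists t'.
Qed.

Fixpoint bounded_seqs (n k : nat) : seq (seq nat) :=
  if k is k'.+1 then
    [::] :: [seq a :: t | a <- iota 0 n.+1, t <- bounded_seqs n k']
  else [:: [::]].

Lemma mem_bounded_seqs (n k : nat) (t : seq nat) :
  size t <= k -> all (leq^~ n) t -> t \in bounded_seqs n k.
Proof.
elim: k t => [|k IH] [|a t] // hsize /andP [ha ht].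
have -> : bounded_seqs n k.+1 =
    [::] :: [seq a :: t | a <- iota 0 n.+1, t <- bounded_seqs n k] by [].
by rewrite inE allpairs_f ?orbT ?mem_iota ?IH.
Qed.

Lemma path_ltn_bounded (a : nat) (s : seq nat) :
  path ltn a s -> (size s + a <= last a s) && all (leq^~ (last a s)) (a :: s).
Proof.
elim: s a => [|b s IH] a /=; first by rewrite leqnn.
move=> /andP [hab /IH /= /andP [hsize /andP [hb ->]]].
rewrite hb (leq_trans (ltnW hab) hb) !andbT.
by apply: leq_trans hsize; rewrite addSnnS leq_add2l.
Qed.

Section Mu.
Variables (C : preadd) (E : exclass C).
Hypotheses (HE : exact_structure E) (Hfin : finite_exact E).
Local Notation Obj := (Obj C).
Local Notation PS := (proper_sub E).

Lemma chainR_lE_path (x : Obj) (xs : seq Obj) :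
  chainR PS x xs -> path ltn (lE E x) (map (lE E) xs).
Proof.
elim: xs x => [|y ys IH] x //= [hxy hys].
by rewrite (proper_sub_lE_lt HE Hfin hxy) IH.
Qed.

Lemma mu_cand_cons (X : Obj) (t : seq nat) :
  mu_cand E X t -> exists a t', t = a :: t' /\ 0 < a.
Proof.
move=> [x0 [xs [_ hind _ ->]]]; exists (lE E x0), (map (lE E) xs); split => //.
by apply/(lE_gt0P HE Hfin); case: (hind x0 (or_introl erefl)).
Qed.

Lemma mu_cand_last (X : Obj) (t : seq nat) :
  mu_cand E X t -> last 0 t = lE E X.
Proof. by move=> [x0 [xs [<- _ _ ->]]]; rewrite /= last_map. Qed.

Lemma mu_cand_bounded (X : Obj) (t : seq nat) :
  mu_cand E X t -> (size t <= lE E X) && all (leq^~ (lE E X)) t.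
Proof.
move=> [x0 [xs [<- hind /chainR_lE_path/path_ltn_bounded hbd ->]]].
rewrite last_map in hbd; case/andP: hbd => hsize hall; rewrite size_map hall.
rewrite andbT; apply: leq_trans hsize; rewrite /= size_map -addn1 leq_add2l.
by apply/(lE_gt0P HE Hfin); case: (hind x0 (or_introl erefl)).
Qed.

Lemma muE_spec (X : Obj) : indec X ->
  mu_cand E X (muE E X) /\ forall t, mu_cand E X t -> lll t (muE E X).
Proof.
move=> hX.
have hcands t : mu_cand E X t -> t \in bounded_seqs (lE E X) (lE E X).
  by move=> /mu_cand_bounded /andP [hsize hall]; apply: mem_bounded_seqs.
have hne : exists t, mu_cand E X t.
  by exists [:: lE E X], X, [::]; split => // y [<-|[]].
have [m [hm hmax]] := @exists_max_of_finite _ (seqlexi nat^d) _ _ hcands hne.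
apply: (epsilon_spec (inhabits [::])
  (fun t => mu_cand E X t /\ forall t', mu_cand E X t' -> lll t' t)).
by exists m; split => // t /hmax; rewrite lllE.
Qed.

Lemma muE_cons1 (Y : Obj) : indec Y -> exists t, muE E Y = 1 :: t.
Proof.
move=> hY; have [hmu hmax] := muE_spec hY.
have [a [t [emu ha]]] := mu_cand_cons hmu.
have [x0 [xs [hch hind hlast hx0]]] := indec_root HE Hfin hY.
have : lll (map (lE E) (x0 :: xs)) (muE E Y) by apply: hmax; exists x0, xs.
rewrite emu /= hx0; case: eqP => [<-|_]; first by exists t.
by rewrite ltnNge ha.
Qed.

Lemma muE_lE1 (X : Obj) : indec X -> lE E X = 1 -> muE E X = [:: 1].
Proof.
move=> hX hX1; have [hmu _] := muE_spec hX.
have [a [t [emu ha]]] := mu_cand_cons hmu.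
move: (mu_cand_bounded hmu); rewrite emu hX1; case: t {emu} => [|b t] //=.
rewrite andbT => ha1.
by have -> : a = 1 by apply/eqP; rewrite eqn_leq ha1 ha.
Qed.

End Mu.

Theorem proposition7p8 (C : preadd) (E : exclass C)
  (HA : additive C) (HE : exact_structure E) (Hfin : finite_exact E) :
  (* (GR4) *)
  (forall X Y : Obj C, indec X -> indec Y ->
     lll (muE E X) (muE E Y) \/ lll (muE E Y) (muE E X)) /\
  (* (GR5) *)
  (forall n : nat, exists s : seq (seq nat),
     forall X : Obj C, indec X -> (lE E X <= n)%N -> muE E X \in s) /\
  (* (GR6) *)
  (forall X : Obj C, indec X ->
     (E_simple E X <-> forall Y : Obj C, indec Y -> lll (muE E X) (muE E Y))).
Proof.
split; first by move=> X Y _ _; apply/orP; apply: lll_total.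
split.
  move=> n; exists (bounded_seqs n n) => X hX hXn.
  have /andP [hsize hall] := mu_cand_bounded HE Hfin (muE_spec HE Hfin hX).1.
  apply: mem_bounded_seqs; first exact: leq_trans hsize hXn.
  by apply/allP => b /(allP hall) hb; apply: leq_trans hb hXn.
move=> X hX; rewrite E_simpleE //; last exact: hX.1.
split=> [hX1 Y hY|hleast].
  by rewrite muE_lE1 //; have [t ->] := muE_cons1 HE Hfin hY.
have [x0 [xs [_ hind _ hx0]]] := indec_root HE Hfin hX.
have hx0_indec : indec x0 by apply: hind; left.
have [t et] := muE_cons1 HE Hfin hX.
move: (hleast x0 hx0_indec); rewrite et muE_lE1 //=; case: t et => [|//] et _.
by rewrite -(mu_cand_last (muE_spec HE Hfin hX).1) et.
Qed.
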